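(* Under the hypotheses and notation of the context, the limit $\bar\Psi(+\infty)=\lim_{t\to+\infty}\bar\Psi(t)$ exists and $$\bar\Psi(+\infty)\in\Big\{0,\ -\tfrac{p-1}{2(p+1)}(k^2+l^2)\sigma_0^{\frac{p+1}{p-1}}\Big\},$$ where $k,l\ge0$ are not both $0$ and satisfy $\mu_1k^{2q}+\beta k^{q-1}l^{q+1}=1$, $\mu_2l^{2q}+\beta l^{q-1}k^{q+1}=1$ (if one of $k,l$ is $0$, say $k=0$, this is understood as $\mu_2l^{2q}=1$, and symmetrically).
   Context: Let $n\ge3$, $\mu_1,\mu_2,\beta>0$, $p=2q+1$ with $\frac{n}{n-2}<p<\frac{n+2}{n-2}$, and $(u,v)$ a nonnegative radial $C^2(\mathbb{R}^n\setminus\{0\})$ solution of $-\Delta u=\mu_1u^{2q+1}+\beta u^qv^{q+1}$, $-\Delta v=\mu_2v^{2q+1}+\beta v^qu^{q+1}$ in $\mathbb{R}^n\setminus\{0\}$. $\bar u(x)=|x|^{2-n}u(x/|x|^2)$, $\bar v(x)=|x|^{2-n}v(x/|x|^2)$, $\alpha=p(n-2)-(n+2)$, $\delta_0=\frac{2+\alpha}{p-1}$, $\bar w_1(t)=e^{-\delta_0t}\bar u(e^{-t})$, $\bar w_2(t)=e^{-\delta_0t}\bar v(e^{-t})$, $\sigma_0=\frac{(2+\alpha)(n-2)}{(p-1)^2}\big(p-\frac{n+\alpha}{n-2}\big)$, and $$\bar\Psi(t)=\tfrac12\big(|\bar w_1'|^2+|\bar w_2'|^2-\sigma_0(\bar w_1^2+\bar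 w_2^2)\big)+\tfrac1{p+1}\big(\mu_1\bar w_1^{p+1}+2\beta\bar w_1^{q+1}\bar w_2^{q+1}+\mu_2\bar w_2^{p+1}\big).$$ *)

From Stdlib Require Import Reals Lra.
Open Scope R_scope.

(* Real power of a nonnegative base (used with positive exponents only):
   0^a := 0, x^a := Rpower x a for x > 0. *)
Definition rpow (x a : R) : R := if Rle_dec x 0 then 0 else Rpower x a.

Definition alpha (n : nat) (p : R) : R := p * (INR n - 2) - (INR n + 2).
Definition delta0 (n : nat) (p : R) : R := (2 + alpha n p) / (p - 1).
Definition sigma0 (n : nat) (p : R) : R :=
  (2 + alpha n p) * (INR n - 2) / (p - 1) ^ 2
  * (p - (INR n + alpha n p) / (INR n - 2)).

(* Radial profile of the Kelvin transform  ubar(x) = |x|^{2-n} u(x/|x|^2):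
   if u(x) = U(|x|) then ubar(x) = Ubar(|x|) with Ubar(r) = r^{2-n} U(1/r). *)
Definition kelvin_profile (n : nat) (U : R -> R) (r : R) : R :=
  Rpower r (2 - INR n) * U (/ r).

Definition wbar (n : nat) (p : R) (U : R -> R) (t : R) : R :=
  exp (- delta0 n p * t) * kelvin_profile n U (exp (- t)).

Definition Psibar (n : nat) (p q mu1 mu2 beta : R) (w1 w2 dw1 dw2 : R -> R)
  (t : R) : R :=
  / 2 * ((dw1 t) ^ 2 + (dw2 t) ^ 2 - sigma0 n p * ((w1 t) ^ 2 + (w2 t) ^ 2))
  + / (p + 1) * (mu1 * rpow (w1 t) (p + 1)
                 + 2 * beta * rpow (w1 t) (q + 1) * rpow (w2 t) (q + 1)
                 + mu2 * rpow (w2 t) (p + 1)).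

Definition lim_pinfty (f : R -> R) (L : R) : Prop :=
  forall eps, 0 < eps -> exists T, forall t, T <= t -> Rabs (f t - L) < eps.

Definition kl_admissible (q mu1 mu2 beta k l : R) : Prop :=
  (0 < k /\ 0 < l /\
     mu1 * Rpower k (2 * q) + beta * Rpower k (q - 1) * Rpower l (q + 1) = 1 /\
     mu2 * Rpower l (2 * q) + beta * Rpower l (q - 1) * Rpower k (q + 1) = 1)
  \/ (k = 0 /\ 0 < l /\ mu2 * Rpower l (2 * q) = 1)
  \/ (l = 0 /\ 0 < k /\ mu1 * Rpower k (2 * q) = 1).

(* With p = 2q+1, the functions wbar_i are W_i(t) = e^(t/q) U_i(e^t), where U_i is the
   radial profile.  In the variable t = ln r the radial system becomes the autonomous
   damped system  W_i'' = a W_i' + sigma0 W_i - F_i(W)  with a = 2/q + 2 - n > 0 (this is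
   where p < (n+2)/(n-2) enters), and Psibar is its energy:  Psibar' = a |W'|^2 >= 0.

   Each U_i is a supersolution  -Delta U >= mu U^p.  Either the flux r^(n-1) U'(r) stays
   nonnegative, and then U vanishes, or it becomes negative, and then integrating the
   equation twice gives U(r) = O(r^(-1/q)); either way W_i is bounded for large t.  The
   damped equation then bounds W_i', so Psibar is nondecreasing and bounded, hence
   converges.  Convergence of Psibar together with a Lipschitz bound on |W'|^2 forces
   W' -> 0, after which every cluster point (x, y) of W is an equilibrium
   sigma0 x = F_1(x, y), sigma0 y = F_2(y, x), and Psibar(+oo) is its energy.  Euler's
   identity for the homogeneous F turns that energy into -(p-1)/(2(p+1)) sigma0 (x^2+y^2),
   and (x, y) = sigma0^(1/(p-1)) (k, l) gives the stated form. *)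
From Stdlib Require Import Reals Lra Lia Classical FunctionalExtensionality IndefiniteDescription.
Open Scope R_scope.

Lemma Rabs_le_between x b : Rabs x <= b -> - b <= x <= b.
Proof. unfold Rabs; destruct (Rcase_abs x); intros; lra. Qed.

Lemma deriv_val f x l l' : derivable_pt_lim f x l -> l = l' -> derivable_pt_lim f x l'.
Proof. now intros H <-. Qed.

Lemma deriv_const c x : derivable_pt_lim (fun _ => c) x 0.
Proof. apply derivable_pt_lim_const. Qed.

Lemma deriv_id x : derivable_pt_lim (fun y => y) x 1.
Proof. apply derivable_pt_lim_id. Qed.

Lemma deriv_add f g x df dg : derivable_pt_lim f x df -> derivable_pt_lim g x dg ->
  derivable_pt_lim (fun y => f y + g y) x (df + dg).
Proof. apply derivable_pt_lim_plus. Qed.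

Lemma deriv_sub f g x df dg : derivable_pt_lim f x df -> derivable_pt_lim g x dg ->
  derivable_pt_lim (fun y => f y - g y) x (df - dg).
Proof. apply derivable_pt_lim_minus. Qed.

Lemma deriv_mul f g x df dg : derivable_pt_lim f x df -> derivable_pt_lim g x dg ->
  derivable_pt_lim (fun y => f y * g y) x (df * g x + f x * dg).
Proof. apply derivable_pt_lim_mult. Qed.

Lemma deriv_scal c f x df : derivable_pt_lim f x df ->
  derivable_pt_lim (fun y => c * f y) x (c * df).
Proof. apply derivable_pt_lim_scal. Qed.

Lemma deriv_comp f g x df dg : derivable_pt_lim g x dg -> derivable_pt_lim f (g x) df ->
  derivable_pt_lim (fun y => f (g y)) x (df * dg).
Proof. apply derivable_pt_lim_comp. Qed.

Lemma deriv_exp f x df : derivable_pt_lim f x df ->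
  derivable_pt_lim (fun y => exp (f y)) x (exp (f x) * df).
Proof. intros H; apply (deriv_comp exp f); [exact H | apply derivable_pt_lim_exp]. Qed.

Lemma deriv_sq f x df : derivable_pt_lim f x df ->
  derivable_pt_lim (fun y => f y ^ 2) x (2 * f x * df).
Proof.
  intros H; eapply deriv_val.
  - apply (deriv_comp (fun y => y ^ 2) f); [exact H | apply derivable_pt_lim_pow].
  - simpl; ring.
Qed.

Lemma deriv_local f g x l d : 0 < d -> (forall y, Rabs (y - x) < d -> f y = g y) ->
  derivable_pt_lim g x l -> derivable_pt_lim f x l.
Proof.
  intros Hd Hfg Hg eps Heps. destruct (Hg eps Heps) as [del Hdel].
  assert (Hm : 0 < Rmin del d) by (apply Rmin_pos; [apply cond_pos | lra]).
  exists (mkposreal _ Hm). intros h Hh0 Hh; simpl in Hh.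
  rewrite (Hfg (x + h)), (Hfg x).
  - apply Hdel; auto. apply Rlt_le_trans with (1 := Hh), Rmin_l.
  - rewrite Rminus_diag, Rabs_R0; lra.
  - replace (x + h - x) with h by ring. apply Rlt_le_trans with (1 := Hh), Rmin_r.
Qed.

Lemma nonincreasing_of_deriv_nonpos f f' a b : a <= b ->
  (forall c, a <= c <= b -> derivable_pt_lim f c (f' c)) ->
  (forall c, a <= c <= b -> f' c <= 0) -> f b <= f a.
Proof.
  intros Hab Hd Hs. destruct (Req_dec a b) as [-> | Hne]; [lra |].
  destruct (MVT_cor2 f f' a b) as [c [Hc Hc']]; [lra | auto |].
  assert (f' c <= 0) by (apply Hs; lra). nra.
Qed.

Lemma nondecreasing_of_deriv_nonneg f f' a b : a <= b ->
  (forall c, a <= c <= b -> derivable_pt_lim f c (f' c)) ->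
  (forall c, a <= c <= b -> 0 <= f' c) -> f a <= f b.
Proof.
  intros Hab Hd Hs.
  enough (- f b <= - f a) by lra.
  apply (nonincreasing_of_deriv_nonpos (fun x => - f x) (fun x => - f' x)); auto.
  - intros c Hc; apply derivable_pt_lim_opp; auto.
  - intros c Hc; specialize (Hs c Hc); lra.
Qed.

Lemma lipschitz_of_deriv_bound f f' a b M : a <= b ->
  (forall c, a <= c <= b -> derivable_pt_lim f c (f' c)) ->
  (forall c, a <= c <= b -> Rabs (f' c) <= M) -> Rabs (f b - f a) <= M * (b - a).
Proof.
  intros Hab Hd Hs. destruct (Req_dec a b) as [-> | Hne].
  { rewrite !Rminus_diag, Rabs_R0; lra. }
  destruct (MVT_cor2 f f' a b) as [c [Hc Hc']]; [lra | auto |].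
  rewrite Hc, Rabs_mult, (Rabs_pos_eq (b - a)) by lra.
  apply Rmult_le_compat_r; [lra | apply Hs; lra].
Qed.

Lemma Un_cv_of_abs_le u l C : (forall k, Rabs (u k - l) <= C / INR (S k)) -> Un_cv u l.
Proof.
  intros Hb eps He. destruct (INR_unbounded (C / eps)) as [N HN].
  exists N. intros k Hk. unfold R_dist. apply Rle_lt_trans with (1 := Hb k).
  assert (HNk : INR N <= INR k) by (apply le_INR; lia).
  assert (Hk0 : 0 < INR (S k)) by (apply lt_0_INR; lia).
  rewrite S_INR in *. apply Rmult_lt_reg_r with (INR k + 1); [lra |].
  unfold Rdiv. rewrite Rmult_assoc, Rinv_l by lra.
  apply (Rmult_lt_compat_r eps) in HN; [| exact He].
  unfold Rdiv in HN. rewrite Rmult_assoc, Rinv_l in HN by lra. nra.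
Qed.

Lemma Un_cv_lim_pinfty f L s : lim_pinfty f L -> (forall k, INR k <= s k) ->
  Un_cv (fun k => f (s k)) L.
Proof.
  intros Hf Hs eps He. destruct (Hf eps He) as [T HT].
  destruct (INR_unbounded T) as [N HN]. exists N. intros k Hk.
  apply HT. apply Rle_trans with (INR k); [| apply Hs].
  assert (INR N <= INR k) by (apply le_INR; lia). lra.
Qed.

Lemma Un_cv_const c : Un_cv (fun _ => c) c.
Proof. intros eps He; exists 0%nat; intros; unfold R_dist; rewrite Rminus_diag, Rabs_R0; lra. Qed.

Lemma Un_cv_sq u l : Un_cv u l -> Un_cv (fun k => u k ^ 2) (l ^ 2).
Proof. intros Hu. simpl pow. repeat apply CV_mult; auto; apply Un_cv_const. Qed.

Lemma Rpower_gt0 x a : 0 < Rpower x a.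
Proof. apply exp_pos. Qed.

Lemma rpow_pos x a : 0 < x -> rpow x a = Rpower x a.
Proof. intros H; unfold rpow; destruct (Rle_dec x 0); [lra | auto]. Qed.

Lemma rpow_npos x a : x <= 0 -> rpow x a = 0.
Proof. intros H; unfold rpow; destruct (Rle_dec x 0); [auto | lra]. Qed.

Lemma rpow_0 a : rpow 0 a = 0.
Proof. apply rpow_npos; lra. Qed.

Lemma rpow_ge0 x a : 0 <= rpow x a.
Proof. unfold rpow; destruct (Rle_dec x 0); [lra | left; apply Rpower_gt0]. Qed.

Lemma rpow_gt0 x a : 0 < x -> 0 < rpow x a.
Proof. intros H; rewrite rpow_pos by exact H; apply Rpower_gt0. Qed.

Lemma rpow_mult c x a : 0 < c -> rpow (c * x) a = Rpower c a * rpow x a.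
Proof.
  intros Hc. destruct (Rle_dec x 0) as [Hx | Hx].
  - rewrite !rpow_npos by nra. ring.
  - rewrite !rpow_pos by nra. rewrite Rpower_mult_distr; lra.
Qed.

Lemma rpow_le x z a : 0 <= a -> x <= z -> rpow x a <= rpow z a.
Proof.
  intros Ha Hxz. destruct (Rle_dec x 0) as [Hx | Hx].
  - rewrite rpow_npos by exact Hx. apply rpow_ge0.
  - rewrite !rpow_pos by lra. apply Rle_Rpower_l; lra.
Qed.

Lemma rpow_succ x a : 0 <= x -> rpow x (a + 1) = x * rpow x a.
Proof.
  intros Hx. destruct (Req_dec x 0) as [-> | Hx0].
  - rewrite !rpow_0; ring.
  - rewrite !rpow_pos by lra. rewrite Rpower_plus, Rpower_1; lra.
Qed.

Lemma Rpower_lt_of_lt_root e a x : 0 < e -> 0 < a -> 0 < x ->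
  x < Rpower e (/ a) -> Rpower x a < e.
Proof.
  intros He Ha Hx Hlt.
  replace e with (Rpower (Rpower e (/ a)) a).
  - apply Rlt_Rpower_l; auto.
  - rewrite Rpower_mult, Rinv_l, Rpower_1; lra.
Qed.

Lemma rpow_deriv b x : 1 < b ->
  derivable_pt_lim (fun y => rpow y b) x (b * rpow x (b - 1)).
Proof.
  intros Hb. destruct (Rtotal_order x 0) as [Hn | [-> | Hp]].
  - apply (deriv_local _ (fun _ => 0) _ _ (- x)); [lra | |].
    + intros y Hy; apply Rabs_def2 in Hy; apply rpow_npos; lra.
    + rewrite rpow_npos, Rmult_0_r by lra. apply deriv_const.
  - rewrite rpow_0, Rmult_0_r. intros eps He.
    exists (mkposreal _ (Rpower_gt0 eps (/ (b - 1)))). intros h Hh0 Hh; simpl in Hh.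
    rewrite Rplus_0_l, rpow_0, !Rminus_0_r.
    destruct (Rle_dec h 0).
    + rewrite rpow_npos by auto. unfold Rdiv; rewrite Rmult_0_l, Rabs_R0; lra.
    + rewrite rpow_pos by lra.
      replace (Rpower h b / h) with (Rpower h (b - 1)).
      * rewrite Rabs_pos_eq by (left; apply Rpower_gt0).
        apply Rpower_lt_of_lt_root; try lra. rewrite Rabs_pos_eq in Hh; lra.
      * replace b with ((b - 1) + 1) at 2 by ring.
        rewrite Rpower_plus, Rpower_1 by lra. field; lra.
  - apply (deriv_local _ (fun y => Rpower y b) _ _ x); [lra | |].
    + intros y Hy; apply Rabs_def2 in Hy; apply rpow_pos; lra.
    + rewrite rpow_pos by auto. apply derivable_pt_lim_power; auto.
Qed.

Lemma deriv_rpow b f x df : 1 < b -> derivable_pt_lim f x df ->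
  derivable_pt_lim (fun y => rpow (f y) b) x (b * rpow (f x) (b - 1) * df).
Proof. intros Hb H. apply (deriv_comp (fun y => rpow y b) f); auto. apply rpow_deriv; auto. Qed.

Lemma rpow_continuity_pt a x0 : 0 < a -> continuity_pt (fun x => rpow x a) x0.
Proof.
  intros Ha. destruct (Rtotal_order x0 0) as [Hn | [-> | Hp]].
  - apply derivable_continuous_pt. exists 0.
    apply (deriv_local _ (fun _ => 0) _ _ (- x0)); [lra | | apply deriv_const].
    intros y Hy; apply Rabs_def2 in Hy; apply rpow_npos; lra.
  - intros eps He. exists (Rpower eps (/ a)); split; [apply Rpower_gt0 |].
    intros x [_ Hx]; simpl in *; unfold R_dist in *.
    rewrite Rminus_0_r in Hx. rewrite rpow_0, Rminus_0_r.
    destruct (Rle_dec x 0).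
    + rewrite rpow_npos, Rabs_R0 by auto; lra.
    + rewrite rpow_pos, Rabs_pos_eq by (lra || left; apply Rpower_gt0).
      apply Rpower_lt_of_lt_root; auto; try lra. rewrite Rabs_pos_eq in Hx; lra.
  - apply derivable_continuous_pt. exists (a * Rpower x0 (a - 1)).
    apply (deriv_local _ (fun y => Rpower y a) _ _ x0); [lra | |].
    + intros y Hy; apply Rabs_def2 in Hy; apply rpow_pos; lra.
    + apply derivable_pt_lim_power; auto.
Qed.

Lemma Un_cv_rpow a u u0 : 0 < a -> Un_cv u u0 -> Un_cv (fun k => rpow (u k) a) (rpow u0 a).
Proof.
  intros Ha Hu. apply (continuity_seq (fun z => rpow z a));
    [apply rpow_continuity_pt, Ha | exact Hu].
Qed.

(** * The nonlinearity and the Emden-Fowler variables *)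

Definition nonlin (q mu beta x y : R) : R :=
  mu * rpow x (2 * q + 1) + beta * rpow x q * rpow y (q + 1).

Lemma nonlin_nonneg q mu beta x y : 0 < mu -> 0 < beta -> 0 <= nonlin q mu beta x y.
Proof.
  intros Hmu Hb. unfold nonlin.
  pose proof (rpow_ge0 x (2 * q + 1)). pose proof (rpow_ge0 x q). pose proof (rpow_ge0 y (q + 1)).
  assert (0 <= rpow x q * rpow y (q + 1)) by (apply Rmult_le_pos; auto).
  nra.
Qed.

Lemma nonlin_ge q mu beta x y : 0 < beta -> mu * rpow x (2 * q + 1) <= nonlin q mu beta x y.
Proof.
  intros Hb. unfold nonlin.
  pose proof (rpow_ge0 x q). pose proof (rpow_ge0 y (q + 1)).
  assert (0 <= rpow x q * rpow y (q + 1)) by (apply Rmult_le_pos; auto).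
  nra.
Qed.

Lemma nonlin_le q mu beta x y x' y' : 0 < q -> 0 < mu -> 0 < beta ->
  x <= x' -> y <= y' -> nonlin q mu beta x y <= nonlin q mu beta x' y'.
Proof.
  intros Hq Hmu Hb Hx Hy. unfold nonlin.
  assert (rpow x (2 * q + 1) <= rpow x' (2 * q + 1)) by (apply rpow_le; lra).
  assert (rpow x q * rpow y (q + 1) <= rpow x' q * rpow y' (q + 1)).
  { apply Rmult_le_compat; try apply rpow_ge0; apply rpow_le; lra. }
  nra.
Qed.

Lemma nonlin_scale q mu beta c x y : 0 < c ->
  nonlin q mu beta (c * x) (c * y) = Rpower c (2 * q + 1) * nonlin q mu beta x y.
Proof.
  intros Hc. unfold nonlin. rewrite !rpow_mult by exact Hc.
  replace (Rpower c (2 * q + 1)) with (Rpower c q * Rpower c (q + 1))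
    by (rewrite <- Rpower_plus; f_equal; ring).
  ring.
Qed.

Lemma Un_cv_nonlin q mu beta x y x0 y0 : 0 < q -> Un_cv x x0 -> Un_cv y y0 ->
  Un_cv (fun k => nonlin q mu beta (x k) (y k)) (nonlin q mu beta x0 y0).
Proof.
  intros Hq Hx Hy. unfold nonlin.
  apply CV_plus; repeat apply CV_mult; try apply Un_cv_const; apply Un_cv_rpow; auto; lra.
Qed.

Lemma forcing_bound q mu beta s x y B : 0 < q -> 0 < mu -> 0 < beta -> 0 < s ->
  0 <= x <= B -> 0 <= y <= B ->
  Rabs (s * x - nonlin q mu beta x y) <= s * B + nonlin q mu beta B B.
Proof.
  intros Hq Hmu Hb Hs Hx Hy.
  pose proof (nonlin_nonneg q mu beta x y Hmu Hb).
  assert (nonlin q mu beta x y <= nonlin q mu beta B B) by (apply nonlin_le; lra).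
  apply Rabs_le. nra.
Qed.

(* With [p = 2q+1] one has [delta0 = n - 2 - 1/q], so the Kelvin transform combines
   with [e^{-delta0 t}] into the Emden-Fowler variable [e^{t/q} U(e^t)]. *)
Definition ef (q : R) (U : R -> R) (t : R) : R := exp (/ q * t) * U (exp t).

Definition ef_deriv (q : R) (U dU : R -> R) (t : R) : R :=
  exp (/ q * t) * (/ q * U (exp t) + exp t * dU (exp t)).

Lemma wbar_ef n q U : 0 < q -> wbar n (2 * q + 1) U = ef q U.
Proof.
  intros Hq. apply functional_extensionality; intros t.
  unfold wbar, ef, kelvin_profile, delta0, alpha, Rpower.
  rewrite ln_exp, <- Rmult_assoc, <- exp_plus, exp_Ropp, Rinv_inv.
  f_equal. f_equal. field. lra.
Qed.

Lemma sigma0_eq n q : 0 < q -> (3 <= n)%nat ->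
  sigma0 n (2 * q + 1) = / q * (INR n - 2 - / q).
Proof.
  intros Hq Hn.
  assert (3 <= INR n) by (replace 3 with (INR 3) by (simpl; ring); apply le_INR; auto).
  unfold sigma0, alpha. field. split; lra.
Qed.

Lemma ef_derivable q U dU t : (forall r, 0 < r -> derivable_pt_lim U r (dU r)) ->
  derivable_pt_lim (ef q U) t (ef_deriv q U dU t).
Proof.
  intros HdU. unfold ef, ef_deriv. eapply deriv_val.
  - apply deriv_mul.
    + apply deriv_exp, deriv_scal, deriv_id.
    + apply (deriv_comp U exp); [apply derivable_pt_lim_exp | apply HdU, exp_pos].
  - cbv beta; ring.
Qed.

Lemma ef_deriv_unique q U dU dw : (forall r, 0 < r -> derivable_pt_lim U r (dU r)) ->
  (forall t, derivable_pt_lim (ef q U) t (dw t)) -> dw = ef_deriv q U dU.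
Proof.
  intros HdU Hdw. apply functional_extensionality; intros t.
  apply (uniqueness_limite (ef q U) t); [apply Hdw | apply ef_derivable, HdU].
Qed.

Lemma nonlin_ef q mu beta U V t : 0 < q ->
  nonlin q mu beta (ef q U t) (ef q V t)
  = exp (/ q * t) * exp t ^ 2 * nonlin q mu beta (U (exp t)) (V (exp t)).
Proof.
  intros Hq. unfold ef. rewrite nonlin_scale by apply exp_pos.
  unfold Rpower. rewrite ln_exp. simpl. rewrite Rmult_1_r, <- !exp_plus.
  f_equal; f_equal; field; lra.
Qed.

Lemma ef_ode n q mu beta U V dU ddU t : 0 < q ->
  (forall r, 0 < r -> derivable_pt_lim U r (dU r)) ->
  (forall r, 0 < r -> derivable_pt_lim dU r (ddU r)) ->
  (forall r, 0 < r -> - (ddU r + (INR n - 1) / r * dU r) = nonlin q mu beta (U r) (V r)) ->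
  derivable_pt_lim (ef_deriv q U dU) t
    ((2 / q + 2 - INR n) * ef_deriv q U dU t + / q * (INR n - 2 - / q) * ef q U t
     - nonlin q mu beta (ef q U t) (ef q V t)).
Proof.
  intros Hq HdU HddU Heq. rewrite nonlin_ef by exact Hq. unfold ef_deriv.
  pose proof (exp_pos t) as Ht.
  eapply deriv_val.
  - apply deriv_mul; [apply deriv_exp, deriv_scal, deriv_id |].
    apply deriv_add.
    + apply deriv_scal, (deriv_comp U exp); [apply derivable_pt_lim_exp | apply HdU; auto].
    + apply deriv_mul; [apply derivable_pt_lim_exp |].
      apply (deriv_comp dU exp); [apply derivable_pt_lim_exp | apply HddU; auto].
  - cbv beta. specialize (Heq (exp t) Ht).
    replace (ddU (exp t)) with
      (- nonlin q mu beta (U (exp t)) (V (exp t)) - (INR n - 1) / exp t * dU (exp t)) by lra.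
    unfold ef. field. split; lra.
Qed.

(** * Decay of radial supersolutions *)

Lemma Rpower_le_of_inv_le X k e : 0 < X -> 0 < k -> 0 < e ->
  k <= Rpower X (- e) -> X <= Rpower k (- / e).
Proof.
  intros HX Hk He H.
  replace X with (Rpower (Rpower X (- e)) (- / e)) at 1.
  - rewrite (Rpower_Ropp _ (/ e)), (Rpower_Ropp k (/ e)).
    apply Rinv_le_contravar; [apply Rpower_gt0 |].
    apply Rle_Rpower_l; [left; apply Rinv_0_lt_compat; exact He | split; assumption].
  - rewrite Rpower_mult. replace (- e * - / e) with 1 by (field; lra). apply Rpower_1, HX.
Qed.

Section RadialSupersolution.

Variables (n : nat) (q mu : R) (U dU ddU f : R -> R).
Hypotheses (Hn : (2 <= n)%nat) (Hq : 0 < q) (Hmu : 0 < mu)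
  (HU0 : forall r, 0 < r -> 0 <= U r)
  (HdU : forall r, 0 < r -> derivable_pt_lim U r (dU r))
  (HddU : forall r, 0 < r -> derivable_pt_lim dU r (ddU r))
  (Heq : forall r, 0 < r -> - (ddU r + (INR n - 1) / r * dU r) = f r)
  (Hf : forall r, 0 < r -> mu * rpow (U r) (2 * q + 1) <= f r).

Let flux (r : R) : R := r ^ (n - 1) * dU r.

Lemma flux_derivable r : 0 < r -> derivable_pt_lim flux r (- r ^ (n - 1) * f r).
Proof.
  intros Hr. unfold flux. eapply deriv_val.
  - apply deriv_mul; [apply derivable_pt_lim_pow | apply HddU, Hr].
  - replace (ddU r) with (- f r - (INR n - 1) / r * dU r) by (specialize (Heq r Hr); lra).
    rewrite minus_INR by lia. replace (n - 1)%nat with (S (n - 2)) by lia.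
    simpl pow; simpl Init.Nat.pred. change (INR 1) with 1. field. lra.
Qed.

Lemma flux_drop a b c : 0 < a <= b -> 0 <= c ->
  (forall x, a <= x <= b -> c <= rpow (U x) (2 * q + 1)) ->
  flux b <= flux a - mu * c * a ^ (n - 1) * (b - a).
Proof.
  intros Hab Hc HUc. set (K := mu * c * a ^ (n - 1)).
  enough (flux b + K * b <= flux a + K * a) by lra.
  apply (nonincreasing_of_deriv_nonpos (fun r => flux r + K * r)
           (fun r => - r ^ (n - 1) * f r + K)); [lra | |].
  - intros r Hr. apply deriv_add; [apply flux_derivable; lra |].
    eapply deriv_val; [apply deriv_scal, deriv_id | ring].
  - intros r Hr. pose proof (Hf r ltac:(lra)). pose proof (HUc r Hr).
    assert (a ^ (n - 1) <= r ^ (n - 1)) by (apply pow_incr; lra).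
    assert (0 < a ^ (n - 1)) by (apply pow_lt; lra).
    assert (a ^ (n - 1) * (mu * c) <= r ^ (n - 1) * f r) by (apply Rmult_le_compat; nra).
    unfold K; nra.
Qed.

Lemma flux_nonincreasing a b : 0 < a <= b -> flux b <= flux a.
Proof.
  intros Hab. pose proof (flux_drop a b 0 Hab (Rle_refl 0)) as H.
  enough (flux b <= flux a - mu * 0 * a ^ (n - 1) * (b - a)) by lra.
  apply H. intros; apply rpow_ge0.
Qed.

Lemma U_zero_of_flux_nonneg : (forall r, 0 < r -> 0 <= flux r) -> forall r, 0 < r -> U r = 0.
Proof.
  intros Hflux s1 Hs1. destruct (HU0 s1 Hs1) as [Hpos | <-]; [exfalso | reflexivity].
  assert (Hmono : forall x, s1 <= x -> U s1 <= U x).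
  { intros x Hx. apply (nondecreasing_of_deriv_nonneg U dU); auto.
    - intros c Hc; apply HdU; lra.
    - intros c Hc. specialize (Hflux c ltac:(lra)). unfold flux in Hflux.
      assert (0 < c ^ (n - 1)) by (apply pow_lt; lra). nra. }
  set (c := rpow (U s1) (2 * q + 1)).
  assert (Hc : 0 < c) by (apply rpow_gt0; exact Hpos).
  set (K := mu * c * s1 ^ (n - 1)).
  assert (HK : 0 < K) by (repeat apply Rmult_lt_0_compat; auto; apply pow_lt, Hs1).
  set (b := s1 + flux s1 / K + 1).
  assert (0 <= flux s1 / K).
  { apply Rmult_le_pos; [apply Hflux, Hs1 | left; apply Rinv_0_lt_compat, HK]. }
  assert (Hb : s1 <= b) by (unfold b; lra).
  assert (Hdrop : flux b <= flux s1 - K * (b - s1)).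
  { apply flux_drop; [lra | lra |]. intros x Hx. apply rpow_le; [lra | apply Hmono; lra]. }
  assert (K * (b - s1) = flux s1 + K) by (unfold b; field; lra).
  specialize (Hflux b ltac:(lra)). lra.
Qed.

Section NegativeFlux.

Variable s0 : R.
Hypotheses (Hs0 : 0 < s0) (Hflux0 : flux s0 < 0).

Lemma dU_neg s : s0 <= s -> dU s < 0.
Proof.
  intros Hs. pose proof (flux_nonincreasing s0 s ltac:(lra)). unfold flux in *.
  assert (0 < s ^ (n - 1)) by (apply pow_lt; lra). nra.
Qed.

Lemma U_nonincreasing x y : s0 <= x -> x <= y -> U y <= U x.
Proof.
  intros Hx Hxy. apply (nonincreasing_of_deriv_nonpos U dU); auto.
  - intros c Hc; apply HdU; lra.
  - intros c Hc; left; apply dU_neg; lra.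
Qed.

(* [flux_drop] on [[s/2, s]], where [U >= U s]. *)
Lemma dU_le s : 2 * s0 <= s -> dU s <= - (mu / 2 ^ n) * s * rpow (U s) (2 * q + 1).
Proof.
  intros Hs. set (c := rpow (U s) (2 * q + 1)).
  assert (Hdrop : flux s <= flux (s / 2) - mu * c * (s / 2) ^ (n - 1) * (s - s / 2)).
  { apply flux_drop; [lra | apply rpow_ge0 |].
    intros x Hx. apply rpow_le; [lra | apply U_nonincreasing; lra]. }
  assert (Hhalf : flux (s / 2) < 0)
    by (pose proof (flux_nonincreasing s0 (s / 2) ltac:(lra)); lra).
  assert (E : (s / 2) ^ (n - 1) * (s - s / 2) = s ^ (n - 1) * (s / 2 ^ n)).
  { replace n with (S (n - 1)) at 3 by lia. simpl pow.
    unfold Rdiv. rewrite Rpow_mult_distr, pow_inv. field. apply pow_nonzero; lra. }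
  assert (0 < s ^ (n - 1)) by (apply pow_lt; lra).
  assert (0 < 2 ^ n) by (apply pow_lt; lra).
  assert (Hdrop' : flux s <= flux (s / 2) - mu * c * (s ^ (n - 1) * (s / 2 ^ n)))
    by (rewrite <- E; lra).
  unfold flux in Hdrop', Hhalf.
  enough (s ^ (n - 1) * dU s <= s ^ (n - 1) * (- (mu / 2 ^ n) * s * c)) by nra.
  replace (s ^ (n - 1) * (- (mu / 2 ^ n) * s * c)) with (- (mu * c * (s ^ (n - 1) * (s / 2 ^ n))))
    by (field; lra).
  lra.
Qed.

(* [dU_le] reads [(U^(-2q))' >= 2 q (mu / 2^n) r]; integrate it. *)
Lemma U_inv_power_growth s : 4 * s0 <= s -> 0 < U s ->
  q * (mu / 2 ^ n) * (s ^ 2 - (2 * s0) ^ 2) <= Rpower (U s) (- (2 * q)).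
Proof.
  intros Hs HUs. set (c := mu / 2 ^ n).
  assert (Hc : 0 < c) by (apply Rdiv_lt_0_compat; [lra | apply pow_lt; lra]).
  assert (HUpos : forall r, 2 * s0 <= r <= s -> 0 < U r).
  { intros r Hr. apply Rlt_le_trans with (U s); [exact HUs | apply U_nonincreasing; lra]. }
  set (z := fun r => Rpower (U r) (- (2 * q)) - q * c * r ^ 2).
  assert (Hz : z (2 * s0) <= z s).
  { apply (nondecreasing_of_deriv_nonneg z
      (fun r => - (2 * q) * Rpower (U r) (- (2 * q) - 1) * dU r - q * c * (2 * r))); [lra | |].
    - intros r Hr. unfold z. apply deriv_sub.
      + apply (deriv_comp (fun y => Rpower y (- (2 * q))) U); [apply HdU; lra |].
        apply derivable_pt_lim_power, HUpos, Hr.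
      + eapply deriv_val; [apply deriv_scal, derivable_pt_lim_pow | simpl; ring].
    - intros r Hr. pose proof (HUpos r Hr) as Hu.
      pose proof (dU_le r ltac:(lra)) as Hd. fold c in Hd. rewrite rpow_pos in Hd by exact Hu.
      assert (E : Rpower (U r) (- (2 * q) - 1) * Rpower (U r) (2 * q + 1) = 1).
      { rewrite <- Rpower_plus. replace (- (2 * q) - 1 + (2 * q + 1)) with 0 by ring.
        apply Rpower_O, Hu. }
      pose proof (Rpower_gt0 (U r) (- (2 * q) - 1)).
      assert (Hmul : dU r * Rpower (U r) (- (2 * q) - 1)
              <= - c * r * Rpower (U r) (2 * q + 1) * Rpower (U r) (- (2 * q) - 1))
        by (apply Rmult_le_compat_r; lra).
      replace (- c * r * Rpower (U r) (2 * q + 1) * Rpower (U r) (- (2 * q) - 1))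
        with (- c * r * (Rpower (U r) (- (2 * q) - 1) * Rpower (U r) (2 * q + 1))) in Hmul
        by ring.
      rewrite E in Hmul.
      nra. }
  unfold z in Hz. pose proof (Rpower_gt0 (U (2 * s0)) (- (2 * q))). lra.
Qed.

Lemma U_decay : exists B, forall s, 4 * s0 <= s -> Rpower s (/ q) * U s <= B.
Proof.
  set (kap := q * (mu / 2 ^ n) * (3 / 4)).
  assert (Hkap : 0 < kap).
  { unfold kap. assert (0 < mu / 2 ^ n) by (apply Rdiv_lt_0_compat; [lra | apply pow_lt; lra]).
    nra. }
  exists (Rpower kap (- / (2 * q))). intros s Hs.
  destruct (HU0 s ltac:(lra)) as [HUs | <-].
  2: { rewrite Rmult_0_r. left; apply Rpower_gt0. }
  apply Rpower_le_of_inv_le;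
    [apply Rmult_lt_0_compat; [apply Rpower_gt0 | exact HUs] | exact Hkap | lra |].
  pose proof (U_inv_power_growth s Hs HUs) as Hgrowth.
  rewrite <- Rpower_mult_distr by (apply Rpower_gt0 || exact HUs).
  rewrite Rpower_mult. replace (/ q * - (2 * q)) with (- INR 2) by (simpl; field; lra).
  rewrite Rpower_Ropp, Rpower_pow by lra.
  assert (Hs2 : 0 < s ^ 2) by (apply pow_lt; lra).
  apply Rmult_le_reg_l with (s ^ 2); [exact Hs2 |].
  rewrite <- Rmult_assoc, Rinv_r, Rmult_1_l by lra.
  assert (q * (mu / 2 ^ n) * (s ^ 2 - s ^ 2 / 4) <= q * (mu / 2 ^ n) * (s ^ 2 - (2 * s0) ^ 2)).
  { apply Rmult_le_compat_l; [unfold kap in Hkap; nra | nra]. }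
  unfold kap; nra.
Qed.

End NegativeFlux.

Lemma ef_bounded : exists T0 B, forall t, T0 <= t -> 0 <= ef q U t <= B.
Proof.
  assert (HW0 : forall t, 0 <= ef q U t).
  { intros t. apply Rmult_le_pos; [left; apply exp_pos | apply HU0, exp_pos]. }
  destruct (classic (exists s0, 0 < s0 /\ flux s0 < 0)) as [[s0 [Hs0 Hneg]] | Hno].
  - destruct (U_decay s0 Hs0 Hneg) as [B HB].
    exists (ln (4 * s0)), B. intros t Ht. split; [apply HW0 |].
    unfold ef. replace (exp (/ q * t)) with (Rpower (exp t) (/ q))
      by (unfold Rpower; now rewrite ln_exp).
    apply HB. rewrite <- (exp_ln (4 * s0)) by lra.
    destruct Ht as [Ht | ->]; [left; apply exp_increasing, Ht | right; reflexivity].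
  - exists 0, 0. intros t _. unfold ef.
    rewrite U_zero_of_flux_nonneg; [lra | | apply exp_pos].
    intros r Hr. apply Rnot_lt_le. intros Hlt. apply Hno. eauto.
Qed.

End RadialSupersolution.

(** * Asymptotics of a damped second-order system *)

Lemma deriv_le_of_bounded A G B T0 W D g : 0 < A ->
  (forall t, derivable_pt_lim W t (D t)) ->
  (forall t, derivable_pt_lim D t (A * D t + g t)) ->
  (forall t, T0 <= t -> Rabs (W t) <= B) ->
  (forall t, T0 <= t -> Rabs (g t) <= G) ->
  forall t, T0 <= t -> D t <= G / A.
Proof.
  intros HA HW HD HWb Hg t0 Ht0.
  apply Rnot_lt_le; intros Hgt. set (del := D t0 - G / A).
  assert (Hdel : 0 < del) by (unfold del; lra).
  (* [e^{-A t} (D t - G/A)] is nondecreasing, so [D] stays [del] above [G/A]. *)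
  assert (HY : forall t, t0 <= t -> del <= D t - G / A).
  { intros t Ht.
    assert (H : exp (- A * t0) * (D t0 - G / A) <= exp (- A * t) * (D t - G / A)).
    { apply (nondecreasing_of_deriv_nonneg (fun s => exp (- A * s) * (D s - G / A))
               (fun s => exp (- A * s) * (G + g s))); [exact Ht | |].
      - intros c Hc. eapply deriv_val.
        + apply deriv_mul; [apply deriv_exp, deriv_scal, deriv_id |].
          apply deriv_sub; [apply HD | apply deriv_const].
        + cbv beta. field. lra.
      - intros c Hc. apply Rmult_le_pos; [left; apply exp_pos |].
        pose proof (Rabs_le_between _ _ (Hg c ltac:(lra))). lra. }
    assert (Hdecay : exp (- A * t) <= exp (- A * t0)).
    { destruct (Req_dec t t0) as [-> | Hne]; [lra |].
      left; apply exp_increasing; nra. }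
    assert (H' : exp (- A * t) * del <= exp (- A * t) * (D t - G / A)).
    { apply Rle_trans with (2 := H). apply Rmult_le_compat_r; lra. }
    apply Rmult_le_reg_l with (exp (- A * t)); [apply exp_pos | exact H']. }
  assert (HG : 0 <= G) by (apply Rle_trans with (2 := Hg t0 Ht0), Rabs_pos).
  assert (HGA : 0 <= G / A) by (apply Rmult_le_pos; [lra | left; apply Rinv_0_lt_compat, HA]).
  set (t1 := t0 + (2 * B + 1) / del).
  assert (Hlen : del * (t1 - t0) = 2 * B + 1) by (unfold t1; field; lra).
  assert (Ht1 : t0 <= t1).
  { assert (0 <= B) by (apply Rle_trans with (2 := HWb t0 Ht0), Rabs_pos). nra. }
  assert (Hlin : W t0 - del * t0 <= W t1 - del * t1).
  { apply (nondecreasing_of_deriv_nonneg (fun s => W s - del * s) (fun s => D s - del));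
      [exact Ht1 | |].
    - intros c Hc. apply deriv_sub; [apply HW |].
      eapply deriv_val; [apply deriv_scal, deriv_id | ring].
    - intros c Hc. specialize (HY c ltac:(lra)). lra. }
  pose proof (Rabs_le_between _ _ (HWb t0 Ht0)).
  pose proof (Rabs_le_between _ _ (HWb t1 ltac:(lra))).
  lra.
Qed.

Lemma deriv_bounded_of_bounded A G B T0 W D g : 0 < A ->
  (forall t, derivable_pt_lim W t (D t)) ->
  (forall t, derivable_pt_lim D t (A * D t + g t)) ->
  (forall t, T0 <= t -> Rabs (W t) <= B) ->
  (forall t, T0 <= t -> Rabs (g t) <= G) ->
  forall t, T0 <= t -> Rabs (D t) <= G / A.
Proof.
  intros HA HW HD HWb Hg t Ht. apply Rabs_le. split.
  - enough (- D t <= G / A) by lra.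
    apply (deriv_le_of_bounded A G B T0 (fun s => - W s) (fun s => - D s) (fun s => - g s));
      auto.
    + intros s. apply derivable_pt_lim_opp, HW.
    + intros s. eapply deriv_val; [apply derivable_pt_lim_opp, HD | ring].
    + intros s Hs. rewrite Rabs_Ropp. auto.
    + intros s Hs. rewrite Rabs_Ropp. auto.
  - apply (deriv_le_of_bounded A G B T0 W D g); auto.
Qed.

Lemma lim_of_nondecreasing_bounded f T0 M :
  (forall x y, T0 <= x -> x <= y -> f x <= f y) -> (forall t, T0 <= t -> f t <= M) ->
  exists L, lim_pinfty f L.
Proof.
  intros Hm Hb.
  set (E := fun y => exists t, T0 <= t /\ y = f t).
  assert (HE : bound E) by (exists M; intros y [t [Ht ->]]; auto).
  assert (HE' : exists y, E y) by (exists (f T0), T0; split; [lra | auto]).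
  destruct (completeness E HE HE') as [L [Hub Hlub]].
  exists L. intros eps He.
  destruct (classic (exists t1, T0 <= t1 /\ L - eps < f t1)) as [[t1 [Ht1 Hf]] | Hno].
  - exists t1. intros t Ht. apply Rabs_def1.
    + enough (f t <= L) by lra. apply Hub. exists t; split; [lra | auto].
    + enough (f t1 <= f t) by lra. apply Hm; auto.
  - exfalso. enough (L <= L - eps) by lra. apply Hlub. intros y [t [Ht ->]].
    apply Rnot_lt_le. intros Hlt. apply Hno. exists t; split; auto.
Qed.

(* A Barbalat-type argument: if [Q] stayed above [eps] at arbitrarily late times,
   it would stay above [eps/2] on intervals of fixed length, and [P] would not converge. *)
Lemma lim_zero_of_lipschitz_deriv P Q L T0 K : 0 < K ->
  (forall t, derivable_pt_lim P t (Q t)) -> lim_pinfty P L ->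
  (forall t, T0 <= t -> 0 <= Q t) ->
  (forall x y, T0 <= x -> x <= y -> Rabs (Q y - Q x) <= K * (y - x)) ->
  lim_pinfty Q 0.
Proof.
  intros HK HP HL HQ0 HQlip eps He.
  assert (Hsmall : exists T, forall t, T <= t -> Q t < eps).
  { apply NNPP. intros Hno.
    assert (Hlate : forall T, exists t, T <= t /\ eps <= Q t).
    { intros T. apply NNPP. intros Hn. apply Hno. exists T. intros t Ht.
      apply Rnot_le_lt. intros Hle. apply Hn. eauto. }
    set (h := eps / (2 * K)).
    assert (Hh : 0 < h) by (apply Rdiv_lt_0_compat; lra).
    assert (HKh : K * h = eps / 2) by (unfold h; field; lra).
    destruct (HL (h * eps / 4) ltac:(nra)) as [T1 HT1].
    destruct (Hlate (Rmax T0 T1)) as [t [Ht HQt]].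
    pose proof (Rmax_l T0 T1). pose proof (Rmax_r T0 T1).
    assert (Hinc : P t - eps / 2 * t <= P (t + h) - eps / 2 * (t + h)).
    { apply (nondecreasing_of_deriv_nonneg (fun x => P x - eps / 2 * x)
               (fun x => Q x - eps / 2)); [lra | |].
      - intros x Hx. apply deriv_sub; [apply HP |].
        eapply deriv_val; [apply deriv_scal, deriv_id | ring].
      - intros x Hx. pose proof (Rabs_le_between _ _ (HQlip t x ltac:(lra) ltac:(lra))).
        assert (K * (x - t) <= K * h) by (apply Rmult_le_compat_l; lra).
        lra. }
    pose proof (Rabs_def2 _ _ (HT1 t ltac:(lra))).
    pose proof (Rabs_def2 _ _ (HT1 (t + h) ltac:(lra))).
    nra. }
  destruct Hsmall as [T HT]. exists (Rmax T T0). intros t Ht.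
  pose proof (Rmax_l T T0). pose proof (Rmax_r T T0).
  rewrite Rminus_0_r, Rabs_pos_eq by (apply HQ0; lra). apply HT; lra.
Qed.

Lemma lim_pinfty_zero_of_sq_le D a Q : 0 < a -> lim_pinfty Q 0 ->
  (forall t, a * D t ^ 2 <= Q t) -> lim_pinfty D 0.
Proof.
  intros Ha HQ HDQ eps He.
  assert (Hae : 0 < a * eps ^ 2) by (apply Rmult_lt_0_compat; [exact Ha | apply pow_lt, He]).
  destruct (HQ _ Hae) as [T HT]. exists T. intros t Ht.
  specialize (HT t Ht). specialize (HDQ t).
  rewrite Rminus_0_r in *. apply Rabs_def2 in HT.
  assert (D t ^ 2 < eps ^ 2) by nra.
  apply Rabs_def1; nra.
Qed.

Definition cluster_at_pinfty (W1 W2 : R -> R) (x0 y0 : R) : Prop :=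
  forall eps T, 0 < eps ->
    exists t, T <= t /\ Rabs (W1 t - x0) < eps /\ Rabs (W2 t - y0) < eps.

Lemma ValAdh_near u l : ValAdh u l ->
  forall eps N, 0 < eps -> exists k, (N <= k)%nat /\ Rabs (u k - l) < eps.
Proof.
  intros H eps N He. destruct (H (fun x => Rabs (x - l) < eps) N) as [k [Hk Hv]].
  - exists (mkposreal eps He). intros x Hx. exact Hx.
  - exists k; auto.
Qed.

(* Bolzano-Weierstrass twice: first for [W1] along integer times, then for [W2]
   along times where [W1] is already close to its cluster value. *)
Lemma cluster_at_pinfty_exists W1 W2 T0 B :
  (forall t, T0 <= t -> 0 <= W1 t <= B /\ 0 <= W2 t <= B) ->
  exists x0 y0, cluster_at_pinfty W1 W2 x0 y0.
Proof.
  intros HB.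
  assert (Htime : forall k, T0 <= T0 + INR k) by (intros k; pose proof (pos_INR k); lra).
  set (u := fun k => W1 (T0 + INR k)).
  destruct (Bolzano_Weierstrass u (fun c => 0 <= c <= B) (compact_P3 0 B)) as [x0 Hx0].
  { intros k. apply (HB _ (Htime k)). }
  assert (Hpick : forall j, exists k, (j <= k)%nat /\ Rabs (u k - x0) < / INR (S j)).
  { intros j. apply ValAdh_near; [exact Hx0 |]. apply Rinv_0_lt_compat, lt_0_INR; lia. }
  destruct (functional_choice _ Hpick) as [idx Hidx].
  set (v := fun j => W2 (T0 + INR (idx j))).
  destruct (Bolzano_Weierstrass v (fun c => 0 <= c <= B) (compact_P3 0 B)) as [y0 Hy0].
  { intros j. apply (HB _ (Htime _)). }
  exists x0, y0. intros eps T He.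
  destruct (INR_unbounded (Rmax (T - T0) (/ eps))) as [N HN].
  pose proof (Rmax_l (T - T0) (/ eps)). pose proof (Rmax_r (T - T0) (/ eps)).
  destruct (ValAdh_near v y0 Hy0 eps N He) as [j [Hj Hv]].
  destruct (Hidx j) as [Hjk Hu].
  assert (HNj : INR N <= INR j) by (apply le_INR; exact Hj).
  assert (HNk : INR N <= INR (idx j)) by (apply le_INR; lia).
  exists (T0 + INR (idx j)). split; [lra | split; [| exact Hv]].
  apply Rlt_trans with (1 := Hu). rewrite <- (Rinv_inv eps).
  apply Rinv_lt_contravar; [| rewrite S_INR; lra].
  apply Rmult_lt_0_compat; [apply Rinv_0_lt_compat, He | apply lt_0_INR; lia].
Qed.

Lemma cluster_at_pinfty_nonneg W1 W2 T0 x0 y0 :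
  (forall t, T0 <= t -> 0 <= W1 t /\ 0 <= W2 t) ->
  cluster_at_pinfty W1 W2 x0 y0 -> 0 <= x0 /\ 0 <= y0.
Proof.
  intros HW Hc. split; apply Rnot_lt_le; intros Hneg.
  - destruct (Hc (- x0) T0 ltac:(lra)) as [t [Ht [Hx _]]].
    pose proof (HW t Ht). apply Rabs_def2 in Hx. lra.
  - destruct (Hc (- y0) T0 ltac:(lra)) as [t [Ht [_ Hy]]].
    pose proof (HW t Ht). apply Rabs_def2 in Hy. lra.
Qed.

(* Along a cluster point of [(W1, W2)], the difference quotients of [D] over windows of
   length [h] are [O(h)] once [|D| < h^2], so a mean value point of each window
   gives times where [D'] is small while [(W1, W2)] has moved by [O(h)] only. *)
Lemma cluster_seq_vanishing_deriv W1 W2 E1 E2 D dD T0 M x0 y0 :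
  (forall t, derivable_pt_lim W1 t (E1 t)) -> (forall t, derivable_pt_lim W2 t (E2 t)) ->
  (forall t, T0 <= t -> Rabs (E1 t) <= M /\ Rabs (E2 t) <= M) ->
  (forall t, derivable_pt_lim D t (dD t)) -> lim_pinfty D 0 ->
  cluster_at_pinfty W1 W2 x0 y0 ->
  exists s : nat -> R, (forall k, INR k <= s k) /\
    Un_cv (fun k => W1 (s k)) x0 /\ Un_cv (fun k => W2 (s k)) y0 /\
    Un_cv (fun k => dD (s k)) 0.
Proof.
  intros HW1 HW2 HE HD HD0 Hc.
  assert (Hk : forall k, exists s, INR k <= s /\
            Rabs (W1 s - x0) <= (1 + M) / INR (S k) /\
            Rabs (W2 s - y0) <= (1 + M) / INR (S k) /\
            Rabs (dD s - 0) <= 2 / INR (S k)).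
  { intros k. set (h := / INR (S k)).
    assert (Hh : 0 < h) by (apply Rinv_0_lt_compat, lt_0_INR; lia).
    destruct (HD0 (h * h) ltac:(nra)) as [T HT].
    destruct (Hc h (Rmax (Rmax T T0) (INR k)) Hh) as [t [Ht [Hx Hy]]].
    pose proof (Rmax_l (Rmax T T0) (INR k)). pose proof (Rmax_r (Rmax T T0) (INR k)).
    pose proof (Rmax_l T T0). pose proof (Rmax_r T T0).
    destruct (MVT_cor2 D dD t (t + h)) as [xi [Hxi Hxi']]; [lra | intros; apply HD |].
    exists xi. unfold Rdiv. fold h. split; [lra |].
    assert (Hmove : forall W E, (forall t, derivable_pt_lim W t (E t)) ->
              (forall t, T0 <= t -> Rabs (E t) <= M) -> Rabs (W xi - W t) <= M * h).
    { intros W E HW HEb.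
      apply Rle_trans with (M * (xi - t)).
      - apply (lipschitz_of_deriv_bound W E); [lra | intros; apply HW | intros; apply HEb; lra].
      - apply Rmult_le_compat_l; [| lra].
        apply Rle_trans with (2 := proj1 (HE t ltac:(lra))), Rabs_pos. }
    pose proof (Hmove W1 E1 HW1 (fun t Ht => proj1 (HE t Ht))).
    pose proof (Hmove W2 E2 HW2 (fun t Ht => proj2 (HE t Ht))).
    split; [| split].
    - replace (W1 xi - x0) with ((W1 xi - W1 t) + (W1 t - x0)) by ring.
      eapply Rle_trans; [apply Rabs_triang | lra].
    - replace (W2 xi - y0) with ((W2 xi - W2 t) + (W2 t - y0)) by ring.
      eapply Rle_trans; [apply Rabs_triang | lra].
    - rewrite Rminus_0_r.
      pose proof (Rabs_def2 _ _ (HT t ltac:(lra))).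
      pose proof (Rabs_def2 _ _ (HT (t + h) ltac:(lra))).
      replace (t + h - t) with h in Hxi by ring.
      rewrite !Rminus_0_r in *.
      apply Rabs_le. split; nra. }
  destruct (functional_choice _ Hk) as [s Hs].
  exists s. split; [intros k; apply Hs |].
  split; [| split]; [apply Un_cv_of_abs_le with (C := 1 + M) ..
                    | apply Un_cv_of_abs_le with (C := 2)]; intros k; apply Hs.
Qed.

Lemma cluster_at_pinfty_swap W1 W2 x0 y0 :
  cluster_at_pinfty W1 W2 x0 y0 -> cluster_at_pinfty W2 W1 y0 x0.
Proof.
  intros H eps T He. destruct (H eps T He) as [t [Ht [Hx Hy]]]. exists t; auto.
Qed.

Definition potential (q mu1 mu2 beta x y : R) : R :=
  / (2 * q + 2) * (mu1 * rpow x (2 * q + 2) + 2 * beta * rpow x (q + 1) * rpow y (q + 1)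
                   + mu2 * rpow y (2 * q + 2)).

Definition rest_energy (q s mu1 mu2 beta x y : R) : R :=
  - s / 2 * (x ^ 2 + y ^ 2) + potential q mu1 mu2 beta x y.

Lemma Psibar_eq n q mu1 mu2 beta W1 W2 D1 D2 :
  Psibar n (2 * q + 1) q mu1 mu2 beta W1 W2 D1 D2
  = fun t => / 2 * (D1 t ^ 2 + D2 t ^ 2)
             + rest_energy q (sigma0 n (2 * q + 1)) mu1 mu2 beta (W1 t) (W2 t).
Proof.
  apply functional_extensionality; intros t. unfold Psibar, rest_energy, potential.
  replace (2 * q + 1 + 1) with (2 * q + 2) by ring. unfold Rdiv. ring.
Qed.

Lemma potential_derivable q mu1 mu2 beta W1 W2 D1 D2 t : 0 < q ->
  derivable_pt_lim W1 t (D1 t) -> derivable_pt_lim W2 t (D2 t) ->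
  derivable_pt_lim (fun t => potential q mu1 mu2 beta (W1 t) (W2 t)) t
    (D1 t * nonlin q mu1 beta (W1 t) (W2 t) + D2 t * nonlin q mu2 beta (W2 t) (W1 t)).
Proof.
  intros Hq H1 H2. unfold potential. eapply deriv_val.
  - apply deriv_scal. apply deriv_add; [apply deriv_add |].
    + apply deriv_scal, deriv_rpow; [lra | exact H1].
    + apply deriv_mul; [apply deriv_scal |]; apply deriv_rpow;
      first [lra | apply H1 | apply H2].
    + apply deriv_scal, deriv_rpow; [lra | exact H2].
  - unfold nonlin.
    replace (2 * q + 2 - 1) with (2 * q + 1) by ring. replace (q + 1 - 1) with q by ring.
    field. lra.
Qed.

Lemma rest_energy_le q s mu1 mu2 beta x y B : 0 < q -> 0 < mu1 -> 0 < mu2 -> 0 < beta ->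
  0 < s -> 0 <= x <= B -> 0 <= y <= B ->
  rest_energy q s mu1 mu2 beta x y <= potential q mu1 mu2 beta B B.
Proof.
  intros Hq Hmu1 Hmu2 Hb Hs Hx Hy. unfold rest_energy, potential.
  assert (rpow x (2 * q + 2) <= rpow B (2 * q + 2)) by (apply rpow_le; lra).
  assert (rpow y (2 * q + 2) <= rpow B (2 * q + 2)) by (apply rpow_le; lra).
  assert (rpow x (q + 1) * rpow y (q + 1) <= rpow B (q + 1) * rpow B (q + 1)).
  { apply Rmult_le_compat; try apply rpow_ge0; apply rpow_le; lra. }
  assert (Hpot : / (2 * q + 2) * (mu1 * rpow x (2 * q + 2)
                   + 2 * beta * rpow x (q + 1) * rpow y (q + 1) + mu2 * rpow y (2 * q + 2))
          <= / (2 * q + 2) * (mu1 * rpow B (2 * q + 2)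
                   + 2 * beta * rpow B (q + 1) * rpow B (q + 1) + mu2 * rpow B (2 * q + 2))).
  { apply Rmult_le_compat_l; [left; apply Rinv_0_lt_compat; lra | nra]. }
  assert (0 <= s / 2 * (x ^ 2 + y ^ 2)) by (apply Rmult_le_pos; nra).
  unfold Rdiv in *. lra.
Qed.

Lemma Un_cv_rest_energy q s mu1 mu2 beta x y x0 y0 : 0 < q -> Un_cv x x0 -> Un_cv y y0 ->
  Un_cv (fun k => rest_energy q s mu1 mu2 beta (x k) (y k)) (rest_energy q s mu1 mu2 beta x0 y0).
Proof.
  intros Hq Hx Hy. unfold rest_energy, potential. simpl pow.
  apply CV_plus; repeat first [apply CV_plus | apply CV_mult | apply Un_cv_const
                               | apply Un_cv_rpow; [lra | assumption] | assumption].
Qed.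

Lemma forcing_zero_at_cluster q mu beta s a W Wo D Do T0 M x0 y0 : 0 < q ->
  (forall t, derivable_pt_lim W t (D t)) -> (forall t, derivable_pt_lim Wo t (Do t)) ->
  (forall t, derivable_pt_lim D t (a * D t + s * W t - nonlin q mu beta (W t) (Wo t))) ->
  (forall t, T0 <= t -> Rabs (D t) <= M /\ Rabs (Do t) <= M) ->
  lim_pinfty D 0 -> cluster_at_pinfty W Wo x0 y0 ->
  s * x0 - nonlin q mu beta x0 y0 = 0.
Proof.
  intros Hq HW HWo HD HM HD0 Hc.
  destruct (cluster_seq_vanishing_deriv W Wo D Do D
              (fun t => a * D t + s * W t - nonlin q mu beta (W t) (Wo t)) T0 M x0 y0)
    as [sq [Hsq [Hx [Hy HdD]]]]; auto.
  apply (UL_sequence (fun k => s * W (sq k) - nonlin q mu beta (W (sq k)) (Wo (sq k)))).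
  - apply CV_minus; [apply CV_mult; [apply Un_cv_const | exact Hx] | apply Un_cv_nonlin; auto].
  - replace (fun k => s * W (sq k) - nonlin q mu beta (W (sq k)) (Wo (sq k))) with
      (fun k => (a * D (sq k) + s * W (sq k) - nonlin q mu beta (W (sq k)) (Wo (sq k)))
                - a * D (sq k)) by (apply functional_extensionality; intros; ring).
    replace 0 with (0 - a * 0) by ring.
    apply CV_minus; [exact HdD | apply CV_mult; [apply Un_cv_const |]].
    apply Un_cv_lim_pinfty; [exact HD0 | exact Hsq].
Qed.

Section DampedSystem.

Variables (q mu1 mu2 beta s a : R) (W1 W2 D1 D2 : R -> R) (T0 B : R).
Hypotheses (Hq : 0 < q) (Hmu1 : 0 < mu1) (Hmu2 : 0 < mu2) (Hbeta : 0 < beta)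
  (Hs : 0 < s) (Ha : 0 < a)
  (HW1 : forall t, derivable_pt_lim W1 t (D1 t))
  (HW2 : forall t, derivable_pt_lim W2 t (D2 t))
  (HD1 : forall t, derivable_pt_lim D1 t (a * D1 t + s * W1 t - nonlin q mu1 beta (W1 t) (W2 t)))
  (HD2 : forall t, derivable_pt_lim D2 t (a * D2 t + s * W2 t - nonlin q mu2 beta (W2 t) (W1 t)))
  (HB : forall t, T0 <= t -> 0 <= W1 t <= B /\ 0 <= W2 t <= B).

Let energy (t : R) : R :=
  / 2 * (D1 t ^ 2 + D2 t ^ 2) + rest_energy q s mu1 mu2 beta (W1 t) (W2 t).

Let G : R := s * B + nonlin q mu1 beta B B + nonlin q mu2 beta B B.

Lemma energy_derivable t : derivable_pt_lim energy t (a * (D1 t ^ 2 + D2 t ^ 2)).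
Proof.
  unfold energy, rest_energy. eapply deriv_val.
  - apply deriv_add; [apply deriv_scal, deriv_add; apply deriv_sq; auto |].
    apply deriv_add; [apply deriv_scal, deriv_add; apply deriv_sq; auto |].
    apply potential_derivable; auto.
  - field.
Qed.

Lemma forcing_bounded t : T0 <= t ->
  Rabs (s * W1 t - nonlin q mu1 beta (W1 t) (W2 t)) <= G /\
  Rabs (s * W2 t - nonlin q mu2 beta (W2 t) (W1 t)) <= G.
Proof.
  intros Ht. destruct (HB t Ht) as [H1 H2].
  pose proof (forcing_bound q mu1 beta s (W1 t) (W2 t) B Hq Hmu1 Hbeta Hs H1 H2).
  pose proof (forcing_bound q mu2 beta s (W2 t) (W1 t) B Hq Hmu2 Hbeta Hs H2 H1).
  pose proof (nonlin_nonneg q mu1 beta B B Hmu1 Hbeta).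
  pose proof (nonlin_nonneg q mu2 beta B B Hmu2 Hbeta).
  unfold G. split; lra.
Qed.

Lemma velocity_bounded t : T0 <= t -> Rabs (D1 t) <= G / a /\ Rabs (D2 t) <= G / a.
Proof.
  assert (HWb : forall W, (forall t, T0 <= t -> 0 <= W t <= B) ->
            forall t, T0 <= t -> Rabs (W t) <= B).
  { intros W HW u Hu. apply Rabs_le. specialize (HW u Hu). lra. }
  intros Ht. split.
  - apply (deriv_bounded_of_bounded a G B T0 W1 D1
             (fun t => s * W1 t - nonlin q mu1 beta (W1 t) (W2 t))); auto.
    + intros u. eapply deriv_val; [apply HD1 | ring].
    + apply HWb. intros u Hu. apply HB, Hu.
    + intros u Hu. apply forcing_bounded, Hu.
  - apply (deriv_bounded_of_bounded a G B T0 W2 D2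
             (fun t => s * W2 t - nonlin q mu2 beta (W2 t) (W1 t))); auto.
    + intros u. eapply deriv_val; [apply HD2 | ring].
    + apply HWb. intros u Hu. apply HB, Hu.
    + intros u Hu. apply forcing_bounded, Hu.
Qed.

Lemma energy_converges : exists L, lim_pinfty energy L.
Proof.
  apply (lim_of_nondecreasing_bounded energy T0
           ((G / a) ^ 2 + potential q mu1 mu2 beta B B)).
  - intros x y Hx Hxy.
    apply (nondecreasing_of_deriv_nonneg energy (fun t => a * (D1 t ^ 2 + D2 t ^ 2)));
      [exact Hxy | intros; apply energy_derivable |].
    intros c _. apply Rmult_le_pos; [lra |]. nra.
  - intros t Ht. unfold energy.
    destruct (velocity_bounded t Ht) as [Hv1 Hv2]. destruct (HB t Ht) as [H1 H2].
    pose proof (pow_maj_Rabs _ _ 2 Hv1). pose proof (pow_maj_Rabs _ _ 2 Hv2).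
    pose proof (rest_energy_le q s mu1 mu2 beta _ _ B Hq Hmu1 Hmu2 Hbeta Hs H1 H2).
    lra.
Qed.

Let kinetic (t : R) : R := a * (D1 t ^ 2 + D2 t ^ 2).

Lemma accel_bounded t : T0 <= t ->
  Rabs (a * D1 t + s * W1 t - nonlin q mu1 beta (W1 t) (W2 t)) <= 2 * G /\
  Rabs (a * D2 t + s * W2 t - nonlin q mu2 beta (W2 t) (W1 t)) <= 2 * G.
Proof.
  intros Ht. destruct (velocity_bounded t Ht) as [Hv1 Hv2].
  destruct (forcing_bounded t Ht) as [Hg1 Hg2].
  assert (Hsum : forall d g, Rabs d <= G / a -> Rabs g <= G -> Rabs (a * d + g) <= 2 * G).
  { intros d g Hd Hg. eapply Rle_trans; [apply Rabs_triang |].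
    rewrite Rabs_mult, Rabs_pos_eq by lra.
    enough (a * Rabs d <= G) by lra.
    apply Rmult_le_compat_l with (r := a) in Hd; [| lra].
    replace (a * (G / a)) with G in Hd by (field; lra). exact Hd. }
  unfold Rminus. rewrite !Rplus_assoc. split; apply Hsum; assumption.
Qed.

Lemma kinetic_lipschitz x y : T0 <= x -> x <= y ->
  Rabs (kinetic y - kinetic x) <= (8 * G ^ 2 + 1) * (y - x).
Proof.
  intros Hx Hxy.
  apply (lipschitz_of_deriv_bound kinetic
    (fun t => a * (2 * D1 t * (a * D1 t + s * W1 t - nonlin q mu1 beta (W1 t) (W2 t))
                 + 2 * D2 t * (a * D2 t + s * W2 t - nonlin q mu2 beta (W2 t) (W1 t)))));
    [exact Hxy | intros c _; apply deriv_scal, deriv_add; apply deriv_sq; auto |].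
  intros c Hc. destruct (velocity_bounded c ltac:(lra)) as [Hv1 Hv2].
  destruct (accel_bounded c ltac:(lra)) as [Ha1 Ha2].
  assert (Hterm : forall d e, Rabs d <= G / a -> Rabs e <= 2 * G ->
            a * Rabs (2 * d * e) <= 4 * G ^ 2).
  { intros d e Hd He. rewrite !Rabs_mult, (Rabs_pos_eq 2) by lra.
    assert (Rabs d * Rabs e <= G / a * (2 * G))
      by (apply Rmult_le_compat; try apply Rabs_pos; assumption).
    replace (4 * G ^ 2) with (2 * a * (G / a * (2 * G))) by (field; lra). nra. }
  rewrite Rabs_mult, Rabs_pos_eq by lra.
  eapply Rle_trans; [apply Rmult_le_compat_l; [lra | apply Rabs_triang] |].
  pose proof (Hterm _ _ Hv1 Ha1). pose proof (Hterm _ _ Hv2 Ha2). nra.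
Qed.

(* The energy converges and its derivative [kinetic] is Lipschitz. *)
Lemma velocity_vanishes : lim_pinfty D1 0 /\ lim_pinfty D2 0.
Proof.
  destruct energy_converges as [L HL].
  assert (HQ : lim_pinfty kinetic 0).
  { apply (lim_zero_of_lipschitz_deriv energy kinetic L T0 (8 * G ^ 2 + 1));
      [nra | exact energy_derivable | exact HL | | exact kinetic_lipschitz].
    intros t _. unfold kinetic. apply Rmult_le_pos; [lra | nra]. }
  split; apply (lim_pinfty_zero_of_sq_le _ a kinetic); auto; intros t; unfold kinetic; nra.
Qed.

Lemma damped_system_limit :
  exists L, lim_pinfty energy L /\
    exists x0 y0, 0 <= x0 /\ 0 <= y0 /\
      s * x0 - nonlin q mu1 beta x0 y0 = 0 /\ s * y0 - nonlin q mu2 beta y0 x0 = 0 /\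
      L = rest_energy q s mu1 mu2 beta x0 y0.
Proof.
  destruct energy_converges as [L HL]. exists L. split; [exact HL |].
  destruct velocity_vanishes as [HV1 HV2].
  destruct (cluster_at_pinfty_exists W1 W2 T0 B HB) as [x0 [y0 Hc]].
  destruct (cluster_at_pinfty_nonneg W1 W2 T0 x0 y0) as [Hx0 Hy0];
    [intros t Ht; split; apply HB, Ht | exact Hc |].
  exists x0, y0. split; [exact Hx0 | split; [exact Hy0 | split; [| split]]].
  - apply (forcing_zero_at_cluster q mu1 beta s a W1 W2 D1 D2 T0 (G / a)); auto.
    apply velocity_bounded.
  - apply (forcing_zero_at_cluster q mu2 beta s a W2 W1 D2 D1 T0 (G / a)); auto.
    + intros t Ht. apply and_comm, velocity_bounded, Ht.
    + apply cluster_at_pinfty_swap, Hc.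
  - destruct (cluster_seq_vanishing_deriv W1 W2 D1 D2 D1 _ T0 (G / a) x0 y0 HW1 HW2
                velocity_bounded HD1 HV1 Hc) as [sq [Hsq [Hx [Hy _]]]].
    apply (UL_sequence (fun k => energy (sq k))); [apply Un_cv_lim_pinfty; auto |].
    replace (rest_energy q s mu1 mu2 beta x0 y0)
      with (/ 2 * (0 ^ 2 + 0 ^ 2) + rest_energy q s mu1 mu2 beta x0 y0) by (simpl; ring).
    apply CV_plus;
      [apply CV_mult; [apply Un_cv_const | apply CV_plus] | apply Un_cv_rest_energy; auto];
      apply Un_cv_sq, Un_cv_lim_pinfty; auto.
Qed.

End DampedSystem.

(** * Equilibria *)

Lemma rest_energy_equilibrium q s mu1 mu2 beta x0 y0 : 0 < q -> 0 <= x0 -> 0 <= y0 ->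
  s * x0 - nonlin q mu1 beta x0 y0 = 0 -> s * y0 - nonlin q mu2 beta y0 x0 = 0 ->
  rest_energy q s mu1 mu2 beta x0 y0 = - (q / (2 * q + 2)) * (x0 ^ 2 + y0 ^ 2) * s.
Proof.
  intros Hq Hx Hy H1 H2. unfold rest_energy, potential. unfold nonlin in H1, H2.
  assert (Hsucc : forall z, 0 <= z -> rpow z (2 * q + 2) = z * rpow z (2 * q + 1)).
  { intros z Hz. rewrite <- rpow_succ by exact Hz. f_equal; ring. }
  rewrite (Hsucc x0 Hx), (Hsucc y0 Hy), (rpow_succ x0 q), (rpow_succ y0 q) by assumption.
  rewrite (rpow_succ y0 q) in H1 by assumption. rewrite (rpow_succ x0 q) in H2 by assumption.
  (* Euler's identity for the homogeneous potential. *)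
  assert (Heuler : mu1 * (x0 * rpow x0 (2 * q + 1)) + 2 * beta * (x0 * rpow x0 q) * (y0 * rpow y0 q)
                   + mu2 * (y0 * rpow y0 (2 * q + 1)) = s * (x0 ^ 2 + y0 ^ 2)).
  { transitivity (x0 * (mu1 * rpow x0 (2 * q + 1) + beta * rpow x0 q * (y0 * rpow y0 q))
                  + y0 * (mu2 * rpow y0 (2 * q + 1) + beta * rpow y0 q * (x0 * rpow x0 q)));
      [ring |].
    replace (mu1 * rpow x0 (2 * q + 1) + beta * rpow x0 q * (y0 * rpow y0 q)) with (s * x0) by lra.
    replace (mu2 * rpow y0 (2 * q + 1) + beta * rpow y0 q * (x0 * rpow x0 q)) with (s * y0) by lra.
    ring. }
  rewrite Heuler. field. lra.
Qed.

Lemma Rpower_root_succ q s : 0 < q -> 0 < s ->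
  Rpower (Rpower s (/ (2 * q))) (2 * q + 1) = s * Rpower s (/ (2 * q)).
Proof.
  intros Hq Hs. rewrite Rpower_mult.
  replace (/ (2 * q) * (2 * q + 1)) with (1 + / (2 * q)) by (field; lra).
  rewrite Rpower_plus, Rpower_1; auto.
Qed.

(* Equilibria scale like [s^(1/(2q))] = [sigma0^(1/(p-1))]. *)
Lemma equilibrium_rescale q mu beta s k l : 0 < q -> 0 < s -> 0 < k -> 0 <= l ->
  let tau := Rpower s (/ (2 * q)) in
  s * (tau * k) - nonlin q mu beta (tau * k) (tau * l) = 0 ->
  mu * Rpower k (2 * q) + beta * Rpower k (q - 1) * rpow l (q + 1) = 1.
Proof.
  intros Hq Hs Hk Hl tau H.
  assert (Ht : 0 < tau) by apply Rpower_gt0.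
  assert (Htau : Rpower tau (2 * q + 1) = s * tau) by (apply Rpower_root_succ; auto).
  rewrite nonlin_scale, Htau in H by exact Ht.
  unfold nonlin in H. rewrite !rpow_pos in H by exact Hk.
  assert (E1 : Rpower k (2 * q + 1) = Rpower k (2 * q) * k)
    by (rewrite Rpower_plus, Rpower_1; auto).
  assert (E2 : Rpower k q = Rpower k (q - 1) * k).
  { rewrite <- (Rpower_1 k) at 3 by exact Hk. rewrite <- Rpower_plus. f_equal; ring. }
  rewrite E1, E2 in H.
  apply Rmult_eq_reg_r with (s * tau * k); [lra |].
  assert (0 < s * tau * k) by (repeat apply Rmult_lt_0_compat; auto).
  nra.
Qed.

Lemma rest_energy_rescaled q s k l : 0 < q -> 0 < s ->
  let tau := Rpower s (/ (2 * q)) in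
  - (q / (2 * q + 2)) * ((tau * k) ^ 2 + (tau * l) ^ 2) * s
  = - ((2 * q + 1 - 1) / (2 * (2 * q + 1 + 1))) * (k ^ 2 + l ^ 2)
      * Rpower s ((2 * q + 1 + 1) / (2 * q + 1 - 1)).
Proof.
  intros Hq Hs tau.
  assert (E : Rpower s ((2 * q + 1 + 1) / (2 * q + 1 - 1)) = s * tau * tau).
  { unfold tau. rewrite <- (Rpower_1 s) at 2 by exact Hs. rewrite <- !Rpower_plus.
    f_equal. field. lra. }
  rewrite E. field. lra.
Qed.

Lemma equilibrium_energy_cases q s mu1 mu2 beta x0 y0 : 0 < q -> 0 < s -> 0 <= x0 -> 0 <= y0 ->
  s * x0 - nonlin q mu1 beta x0 y0 = 0 -> s * y0 - nonlin q mu2 beta y0 x0 = 0 ->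
  rest_energy q s mu1 mu2 beta x0 y0 = 0 \/
  exists k l, kl_admissible q mu1 mu2 beta k l /\
    rest_energy q s mu1 mu2 beta x0 y0
    = - ((2 * q + 1 - 1) / (2 * (2 * q + 1 + 1))) * (k ^ 2 + l ^ 2)
        * Rpower s ((2 * q + 1 + 1) / (2 * q + 1 - 1)).
Proof.
  intros Hq Hs Hx Hy H1 H2. rewrite rest_energy_equilibrium by assumption.
  set (tau := Rpower s (/ (2 * q))). assert (Ht : 0 < tau) by apply Rpower_gt0.
  set (k := x0 / tau). set (l := y0 / tau).
  assert (Ex : x0 = tau * k) by (unfold k; field; lra).
  assert (Ey : y0 = tau * l) by (unfold l; field; lra).
  assert (Hk : 0 <= k) by (unfold k; apply Rmult_le_pos; [lra | left; apply Rinv_0_lt_compat, Ht]).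
  assert (Hl : 0 <= l) by (unfold l; apply Rmult_le_pos; [lra | left; apply Rinv_0_lt_compat, Ht]).
  assert (Hk1 : 0 < k -> mu1 * Rpower k (2 * q) + beta * Rpower k (q - 1) * rpow l (q + 1) = 1).
  { intros Hk0. apply (equilibrium_rescale q mu1 beta s k l); auto.
    fold tau. rewrite <- Ex, <- Ey. exact H1. }
  assert (Hl1 : 0 < l -> mu2 * Rpower l (2 * q) + beta * Rpower l (q - 1) * rpow k (q + 1) = 1).
  { intros Hl0. apply (equilibrium_rescale q mu2 beta s l k); auto.
    fold tau. rewrite <- Ex, <- Ey. exact H2. }
  destruct (Req_dec k 0) as [Hk0 | Hk0]; destruct (Req_dec l 0) as [Hl0 | Hl0].
  - left. rewrite Ex, Ey, Hk0, Hl0. ring.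
  - right. exists k, l. split; [| rewrite Ex, Ey; apply rest_energy_rescaled; auto].
    right; left. rewrite Hk0, rpow_0 in Hl1. repeat split; auto; [lra |]. 
    pose proof (Hl1 ltac:(lra)). lra.
  - right. exists k, l. split; [| rewrite Ex, Ey; apply rest_energy_rescaled; auto].
    right; right. rewrite Hl0, rpow_0 in Hk1. repeat split; auto; [lra |].
    pose proof (Hk1 ltac:(lra)). lra.
  - right. exists k, l. split; [| rewrite Ex, Ey; apply rest_energy_rescaled; auto].
    left. rewrite rpow_pos in Hk1, Hl1 by lra.
    repeat split; [lra | lra | apply Hk1 | apply Hl1]; lra.
Qed.

Lemma exponent_range n q : (3 <= n)%nat ->
  INR n / (INR n - 2) < 2 * q + 1 -> 2 * q + 1 < (INR n + 2) / (INR n - 2) ->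
  0 < q /\ 0 < / q * (INR n - 2 - / q) /\ 0 < 2 / q + 2 - INR n.
Proof.
  intros Hn Hlo Hhi.
  assert (Hn3 : 3 <= INR n) by (replace 3 with (INR 3) by (simpl; ring); apply le_INR, Hn).
  assert (Hn2 : 0 < INR n - 2) by lra.
  apply (Rmult_lt_compat_r (INR n - 2)) in Hlo, Hhi; [| exact Hn2 ..].
  unfold Rdiv in Hlo, Hhi. rewrite Rmult_assoc, Rinv_l, Rmult_1_r in Hlo, Hhi by lra.
  assert (Hq : 0 < q) by nra.
  split; [exact Hq | split].
  - replace (/ q * (INR n - 2 - / q)) with ((q * (INR n - 2) - 1) / (q * q)) by (field; lra).
    apply Rdiv_lt_0_compat; nra.
  - replace (2 / q + 2 - INR n) with ((2 - q * (INR n - 2)) / q) by (field; lra).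
    apply Rdiv_lt_0_compat; nra.
Qed.

Lemma eventually_bounded_pair f g :
  (exists T B, forall t, T <= t -> 0 <= f t <= B) ->
  (exists T B, forall t, T <= t -> 0 <= g t <= B) ->
  exists T B, forall t, T <= t -> 0 <= f t <= B /\ 0 <= g t <= B.
Proof.
  intros [T1 [B1 H1]] [T2 [B2 H2]]. exists (Rmax T1 T2), (Rmax B1 B2). intros t Ht.
  pose proof (Rmax_l T1 T2). pose proof (Rmax_r T1 T2).
  pose proof (Rmax_l B1 B2). pose proof (Rmax_r B1 B2).
  destruct (H1 t ltac:(lra)). destruct (H2 t ltac:(lra)). lra.
Qed.

Theorem lemma4p6 (n : nat) (mu1 mu2 beta p q : R)
  (U V dU dV ddU ddV : R -> R)
  (Hn : (3 <= n)%nat)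
  (Hmu1 : 0 < mu1) (Hmu2 : 0 < mu2) (Hbeta : 0 < beta)
  (Hp : p = 2 * q + 1)
  (Hplo : INR n / (INR n - 2) < p) (Hphi : p < (INR n + 2) / (INR n - 2))
  (HU0 : forall r, 0 < r -> 0 <= U r) (HV0 : forall r, 0 < r -> 0 <= V r)
  (HdU : forall r, 0 < r -> derivable_pt_lim U r (dU r))
  (HdV : forall r, 0 < r -> derivable_pt_lim V r (dV r))
  (HddU : forall r, 0 < r -> derivable_pt_lim dU r (ddU r))
  (HddV : forall r, 0 < r -> derivable_pt_lim dV r (ddV r))
  (HcU : forall r, 0 < r -> continuity_pt ddU r)
  (HcV : forall r, 0 < r -> continuity_pt ddV r)
  (HeqU : forall r, 0 < r ->
     - (ddU r + (INR n - 1) / r * dU r)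
     = mu1 * rpow (U r) (2 * q + 1) + beta * rpow (U r) q * rpow (V r) (q + 1))
  (HeqV : forall r, 0 < r ->
     - (ddV r + (INR n - 1) / r * dV r)
     = mu2 * rpow (V r) (2 * q + 1) + beta * rpow (V r) q * rpow (U r) (q + 1))
  (dw1 dw2 : R -> R)
  (Hdw1 : forall t, derivable_pt_lim (wbar n p U) t (dw1 t))
  (Hdw2 : forall t, derivable_pt_lim (wbar n p V) t (dw2 t)) :
  exists L : R,
    lim_pinfty (Psibar n p q mu1 mu2 beta (wbar n p U) (wbar n p V) dw1 dw2) L
    /\ (L = 0 \/
        exists k l : R, kl_admissible q mu1 mu2 beta k l /\
          L = - ((p - 1) / (2 * (p + 1))) * (k ^ 2 + l ^ 2)
                * Rpower (sigma0 n p) ((p + 1) / (p - 1))).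
Proof.
  subst p. destruct (exponent_range n q Hn Hplo Hphi) as [Hq [Hs Ha]].
  rewrite !wbar_ef in * by exact Hq.
  rewrite (ef_deriv_unique q U dU dw1), (ef_deriv_unique q V dV dw2) by assumption.
  destruct (eventually_bounded_pair (ef q U) (ef q V)) as [T [B HB]].
  { apply (ef_bounded n q mu1 U dU ddU (fun r => nonlin q mu1 beta (U r) (V r))); auto; [lia |].
    intros; apply nonlin_ge, Hbeta. }
  { apply (ef_bounded n q mu2 V dV ddV (fun r => nonlin q mu2 beta (V r) (U r))); auto; [lia |].
    intros; apply nonlin_ge, Hbeta. }
  destruct (damped_system_limit q mu1 mu2 beta (/ q * (INR n - 2 - / q)) (2 / q + 2 - INR n)
              (ef q U) (ef q V) (ef_deriv q U dU) (ef_deriv q V dV) T B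
              Hq Hmu1 Hmu2 Hbeta Hs Ha
              (fun t => ef_derivable q U dU t HdU) (fun t => ef_derivable q V dV t HdV)
              (fun t => ef_ode n q mu1 beta U V dU ddU t Hq HdU HddU HeqU)
              (fun t => ef_ode n q mu2 beta V U dV ddV t Hq HdV HddV HeqV) HB)
    as [L [HL [x0 [y0 [Hx0 [Hy0 [H1 [H2 ->]]]]]]]].
  rewrite Psibar_eq, sigma0_eq by assumption.
  eexists; split; [exact HL |].
  apply equilibrium_energy_cases; assumption.
Qed.
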